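(* For all $j,k\geq2$ with $j<k$, $\mathsf{TS}^1_j\nleq_{\mathrm{W}}\mathsf{TS}^1_k$.
   Context: For $k\geq2$, $\mathsf{TS}^1_k$ is the problem whose instances are colorings $f:\omega\to k$ and whose solutions are infinite sets $S$ together with a color $c<k$ such that $f(x)\neq c$ for all $x\in S$ (thin sets). $\mathsf{P}\leq_{\mathrm{W}}\mathsf{Q}$ means there are Turing functionals $\Phi,\Psi$ such that for every instance $A$ of $\mathsf{P}$, $\Phi(A)$ is an instance of $\mathsf{Q}$, and for every solution $T$ to $\Phi(A)$, $\Psi(A\oplus T)$ is a solution to $A$. *)

From Stdlib Require Import List Arith PeanoNat.
Import ListNotations.

(** * Oracle partial recursive functions (mu-recursive with an oracle primitive).
    Argument lists are untyped: missing arguments default to 0. *)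
Inductive prog : Type :=
| PZero : prog
| PSucc : prog
| PProj : nat -> prog
| POrc : prog
| PComp : prog -> list prog -> prog
| PRec : prog -> prog -> prog           (* primitive recursion on first arg *)
| PMu : prog -> prog.                   (* least k with p (k :: args) = 0 *)

(** Fuel-indexed evaluation relative to an oracle [A : nat -> nat];
    [None] means "not (yet) converged". Results are stable as fuel grows. *)
Fixpoint eval (fuel : nat) (A : nat -> nat) (p : prog) (args : list nat)
  {struct fuel} : option nat :=
  match fuel with
  | 0 => None
  | S fu =>
    match p with
    | PZero => Some 0
    | PSucc => Some (S (hd 0 args))
    | PProj i => Some (nth i args 0)
    | POrc => Some (A (hd 0 args))
    | PComp f gs =>
        let fix evals (gs : list prog) : option (list nat) :=
          match gs with
          | [] => Some []
          | g :: gs' =>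
              match eval fu A g args, evals gs' with
              | Some v, Some vs => Some (v :: vs)
              | _, _ => None
              end
          end in
        match evals gs with
        | Some vs => eval fu A f vs
        | None => None
        end
    | PRec b s =>
        let rest := tl args in
        let fix go (n : nat) : option nat :=
          match n with
          | 0 => eval fu A b rest
          | S m =>
              match go m with
              | Some r => eval fu A s (m :: r :: rest)
              | None => None
              end
          end in
        go (hd 0 args)
    | PMu q =>
        let fix search (cnt k : nat) : option nat :=
          match cnt with
          | 0 => None
          | S c =>
              match eval fu A q (k :: args) with
              | Some 0 => Some k
              | Some _ => search c (S k)
              | None => None
              end
          end in
        search fu 0
    end
  end.

Definition computes (A : nat -> nat) (p : prog) (g : nat -> nat) : Prop :=
  forall x, exists n, eval n A p [x] = Some (g x).

Definition join (A T : nat -> nat) : nat -> nat :=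
  fun n => if Nat.even n then A (Nat.div2 n) else T (Nat.div2 n).

Record problem : Type := Problem {
  instance : (nat -> nat) -> Prop;
  solution : (nat -> nat) -> (nat -> nat) -> Prop
}.

Definition weihrauch_le (P Q : problem) : Prop :=
  exists Phi Psi : prog,
    forall A, instance P A ->
      (exists B, computes A Phi B /\ instance Q B) /\
      (forall B, computes A Phi B ->
         forall T, solution Q B T ->
           exists S, computes (join A T) Psi S /\ solution P A S).

(** TS^1_k. An instance is a coloring f : omega -> k.
    A solution (S, c) is coded by the oracle T with T 0 = c and
    T (n+1) = 1 if n in S, 0 otherwise. *)
Definition TS_instance (k : nat) (f : nat -> nat) : Prop :=
  forall x, f x < k.

Definition TS_solution (k : nat) (f T : nat -> nat) : Prop :=
  T 0 < k /\
  (forall n, T (S n) <= 1) /\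
  (forall m, exists n, m <= n /\ T (S n) = 1) /\          (* S infinite *)
  (forall x, T (S x) = 1 -> f x <> T 0).                 (* f(x) <> c on S *)

Definition TS (k : nat) : problem := Problem (TS_instance k) (TS_solution k).

From Stdlib Require Import List Arith PeanoNat Lia Classical ClassicalEpsilon.
Import ListNotations.

(* The proof has two ingredients.
   - Computability: fuel-indexed evaluation is monotone in the fuel, hence
     deterministic, and obeys the use principle: a converged computation only
     queries finitely many oracle values.  So whatever a total functional
     computes on an argument x (or on all x < N) is already fixed by a finite
     prefix of the oracle.
   - The diagonalisation.  Feed Phi the constant coloring 0, obtaining a
     k-coloring B0.  All colors but at most one (say b) are avoided
     infinitely often by B0, so each of the k-1 colors c <> b yields a thin
     set for B0, on which Psi answers some color d_c in [1, j).  As k-1 >= j,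
     two colors c1 <> c2 give the same answer d, and this answer is fixed by
     a finite prefix.  Now take the coloring which is 0 on a long initial
     segment and d afterwards: Phi still produces a k-coloring agreeing with
     B0 on the relevant prefix, one of c1, c2 yields a thin set for it, and
     Psi must again answer d -- but a thin set for an eventually-d coloring
     cannot have color d. *)

(* * Evaluation of oracle programs *)

(* The local fixpoints inside [eval], made into named functions so that
   one evaluation step can be unfolded and reasoned about. *)
Section EvalHelpers.
Variable ev : prog -> list nat -> option nat.

Section EvalList.
Variable args : list nat.
Fixpoint eval_list (gs : list prog) : option (list nat) :=
  match gs with
  | [] => Some []
  | g :: gs' =>
      match ev g args, eval_list gs' with
      | Some v, Some vs => Some (v :: vs)
      | _, _ => None
      end
  end.
End EvalList.

Section EvalRec.
Variables (b s : prog) (rest : list nat).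
Fixpoint eval_rec (n : nat) : option nat :=
  match n with
  | 0 => ev b rest
  | S m =>
      match eval_rec m with
      | Some r => ev s (m :: r :: rest)
      | None => None
      end
  end.
End EvalRec.

Section EvalSearch.
Variables (q : prog) (args : list nat).
Fixpoint eval_search (cnt k : nat) : option nat :=
  match cnt with
  | 0 => None
  | S c =>
      match ev q (k :: args) with
      | Some 0 => Some k
      | Some _ => eval_search c (S k)
      | None => None
      end
  end.
End EvalSearch.
End EvalHelpers.

Lemma eval_unfold fu A p args : eval (S fu) A p args =
  match p with
  | PZero => Some 0
  | PSucc => Some (S (hd 0 args))
  | PProj i => Some (nth i args 0)
  | POrc => Some (A (hd 0 args))
  | PComp f gs =>
      match eval_list (eval fu A) args gs with
      | Some vs => eval fu A f vs
      | None => None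
      end
  | PRec b s => eval_rec (eval fu A) b s (tl args) (hd 0 args)
  | PMu q => eval_search (eval fu A) q args fu 0
  end.
Proof. destruct p; reflexivity. Qed.

Section HelpersMonotone.
Variables ev1 ev2 : prog -> list nat -> option nat.
Hypothesis ev_incl : forall p a v, ev1 p a = Some v -> ev2 p a = Some v.

Lemma eval_list_incl args gs vs :
  eval_list ev1 args gs = Some vs -> eval_list ev2 args gs = Some vs.
Proof.
  revert vs; induction gs as [|g gs IH]; simpl; intros vs E; auto.
  destruct (ev1 g args) eqn:E1; try discriminate.
  destruct (eval_list ev1 args gs) eqn:E2; try discriminate.
  rewrite (ev_incl _ _ _ E1), (IH _ eq_refl). exact E.
Qed.

Lemma eval_rec_incl b s rest n v :
  eval_rec ev1 b s rest n = Some v -> eval_rec ev2 b s rest n = Some v.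
Proof.
  revert v; induction n as [|n IH]; simpl; intros v E; auto.
  destruct (eval_rec ev1 b s rest n) eqn:E1; try discriminate.
  rewrite (IH _ eq_refl). auto.
Qed.

Lemma eval_search_incl q args c k v :
  eval_search ev1 q args c k = Some v -> eval_search ev2 q args c k = Some v.
Proof.
  revert k; induction c as [|c IH]; simpl; intros k E; try discriminate.
  destruct (ev1 q (k :: args)) as [[|w]|] eqn:E1; try discriminate;
    rewrite (ev_incl _ _ _ E1); auto.
Qed.
End HelpersMonotone.

Lemma eval_search_S ev q args c k : eval_search ev q args (S c) k =
  match ev q (k :: args) with
  | Some 0 => Some k
  | Some _ => eval_search ev q args c (S k)
  | None => None
  end.
Proof. reflexivity. Qed.

Lemma eval_search_more_fuel ev q args c k v :
  eval_search ev q args c k = Some v -> eval_search ev q args (S c) k = Some v.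
Proof.
  revert k; induction c as [|c IH]; intros k E; [discriminate|].
  rewrite eval_search_S in E |- *.
  destruct (ev q (k :: args)) as [[|w]|]; try discriminate; auto.
Qed.

Lemma eval_mono_S n A p a v : eval n A p a = Some v -> eval (S n) A p a = Some v.
Proof.
  revert p a v; induction n as [|n IH]; intros p a v E; [discriminate|].
  rewrite eval_unfold in E |- *.
  destruct p; auto.
  - destruct (eval_list (eval n A) a l) eqn:E1; try discriminate.
    rewrite (eval_list_incl _ _ IH _ _ _ E1). auto.
  - exact (eval_rec_incl _ _ IH _ _ _ _ _ E).
  - apply eval_search_more_fuel. exact (eval_search_incl _ _ IH _ _ _ _ _ E).
Qed.

Lemma eval_mono n m A p a v : n <= m -> eval n A p a = Some v -> eval m A p a = Some v.
Proof. induction 1; auto using eval_mono_S. Qed.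

Lemma eval_det n m A p a v w : eval n A p a = Some v -> eval m A p a = Some w -> v = w.
Proof.
  intros E1 E2. destruct (Nat.le_ge_cases n m) as [h|h].
  - rewrite (eval_mono _ _ _ _ _ _ h E1) in E2. congruence.
  - rewrite (eval_mono _ _ _ _ _ _ h E2) in E1. congruence.
Qed.

(* * The use principle *)

Definition agree (A A' : nat -> nat) (M : nat) : Prop := forall y, y < M -> A' y = A y.

Lemma agree_mono A A' M M' : M <= M' -> agree A A' M' -> agree A A' M.
Proof. intros H H1 y Hy. apply H1. lia. Qed.

(* Joins of agreeing oracles agree, since [div2 y <= y]. *)
Lemma agree_join A A' T T' M :
  agree A A' M -> agree T T' M -> agree (join A T) (join A' T') M.
Proof.
  intros HA HT y Hy. unfold join.
  assert (Nat.div2 y <= y) by (apply Nat.div2_decr; lia).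
  destruct (Nat.even y); [apply HA | apply HT]; lia.
Qed.

Section HelpersContinuous.
Variable E : (nat -> nat) -> prog -> list nat -> option nat.
Hypothesis E_cont : forall p a A, exists M, forall A', agree A A' M -> E A' p a = E A p a.

Lemma eval_list_cont args gs A :
  exists M, forall A', agree A A' M -> eval_list (E A') args gs = eval_list (E A) args gs.
Proof.
  induction gs as [|g gs [M1 H1]]; simpl.
  - exists 0; auto.
  - destruct (E_cont g args A) as [M2 H2].
    exists (M1 + M2). intros A' Ag.
    rewrite H1, H2 by (eapply agree_mono; [|exact Ag]; lia). reflexivity.
Qed.

Lemma eval_rec_cont b s rest n A :
  exists M, forall A', agree A A' M -> eval_rec (E A') b s rest n = eval_rec (E A) b s rest n.
Proof.
  induction n as [|n [M1 H1]]; simpl.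
  - apply E_cont.
  - destruct (eval_rec (E A) b s rest n) as [r|] eqn:Eg.
    + destruct (E_cont s (n :: r :: rest) A) as [M2 H2].
      exists (M1 + M2). intros A' Ag.
      rewrite H1 by (eapply agree_mono; [|exact Ag]; lia).
      apply H2. eapply agree_mono; [|exact Ag]; lia.
    + exists M1. intros A' Ag. rewrite H1; auto.
Qed.

Lemma eval_search_cont q args c k A :
  exists M, forall A', agree A A' M -> eval_search (E A') q args c k = eval_search (E A) q args c k.
Proof.
  revert k; induction c as [|c IH]; intros k; simpl.
  - exists 0; auto.
  - destruct (E_cont q (k :: args) A) as [M1 H1]. destruct (IH (S k)) as [M2 H2].
    exists (M1 + M2). intros A' Ag.
    rewrite H1, H2 by (eapply agree_mono; [|exact Ag]; lia). reflexivity.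
Qed.
End HelpersContinuous.

Lemma eval_cont n p a A : exists M, forall A', agree A A' M -> eval n A' p a = eval n A p a.
Proof.
  revert p a A; induction n as [|n IH]; intros p a A.
  { exists 0; auto. }
  destruct p.
  - exists 0; reflexivity.
  - exists 0; reflexivity.
  - exists 0; reflexivity.
  - exists (S (hd 0 a)); intros A' Ag; rewrite !eval_unfold, Ag; auto.
  - destruct (eval_list_cont (fun A => eval n A) IH a l A) as [M1 H1].
    destruct (eval_list (eval n A) a l) as [vs|] eqn:Ev.
    + destruct (IH p vs A) as [M2 H2]. exists (M1 + M2). intros A' Ag.
      rewrite !eval_unfold, H1, Ev by (eapply agree_mono; [|exact Ag]; lia).
      apply H2. eapply agree_mono; [|exact Ag]; lia.
    + exists M1. intros A' Ag. rewrite !eval_unfold, H1, Ev by auto. reflexivity.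
  - destruct (eval_rec_cont (fun A => eval n A) IH p1 p2 (tl a) (hd 0 a) A) as [M H1].
    exists M. intros. rewrite !eval_unfold. auto.
  - destruct (eval_search_cont (fun A => eval n A) IH p a n 0 A) as [M H1].
    exists M. intros. rewrite !eval_unfold. auto.
Qed.

Lemma computes_use A p g x : computes A p g ->
  exists M, forall A' g', agree A A' M -> computes A' p g' -> g' x = g x.
Proof.
  intros Hg. destruct (Hg x) as [n En]. destruct (eval_cont n p [x] A) as [M HM].
  exists M. intros A' g' Ag Hg'. destruct (Hg' x) as [n' En'].
  rewrite <- (HM A' Ag) in En. exact (eval_det _ _ _ _ _ _ _ En' En).
Qed.

Lemma computes_use_upto A p g N : computes A p g ->
  exists L, forall A' g', agree A A' L -> computes A' p g' -> forall x, x < N -> g' x = g x.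
Proof.
  intros Hg. induction N as [|N [L1 H1]].
  { exists 0. intros; lia. }
  destruct (computes_use A p g N Hg) as [L2 H2].
  exists (L1 + L2). intros A' g' Ag Hg' x Hx.
  destruct (Nat.eq_dec x N) as [->|ne].
  - apply (H2 A'); auto. eapply agree_mono; [|exact Ag]; lia.
  - apply (H1 A'); auto; [eapply agree_mono; [|exact Ag]; lia | lia].
Qed.

(* * Combinatorics of thin sets *)

Lemma pigeonhole n m (f : nat -> nat) : m < n -> (forall i, i < n -> f i < m) ->
  exists i1 i2, i1 < n /\ i2 < n /\ i1 <> i2 /\ f i1 = f i2.
Proof.
  intros Hmn Hf. apply NNPP. intros Hinj. exfalso.
  assert (Hnd : NoDup (map f (seq 0 n))).
  { apply NoDup_map_NoDup_ForallPairs; [|apply seq_NoDup].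
    intros x y Hx Hy Exy. apply in_seq in Hx, Hy.
    apply NNPP. intros Hne. apply Hinj. exists x, y. repeat split; lia. }
  assert (Hincl : incl (map f (seq 0 n)) (seq 0 m)).
  { intros y Hy. apply in_map_iff in Hy as [x [<- Hx]]. apply in_seq in Hx.
    apply in_seq. specialize (Hf x ltac:(lia)). lia. }
  pose proof (NoDup_incl_length Hnd Hincl) as Hlen.
  rewrite length_map, !length_seq in Hlen. lia.
Qed.

Definition avoids (B : nat -> nat) (c : nat) : Prop :=
  forall m, exists n, m <= n /\ B n <> c.

Definition thin_set (B : nat -> nat) (c : nat) : nat -> nat :=
  fun n => match n with 0 => c | S m => if Nat.eqb (B m) c then 0 else 1 end.

Lemma thin_set_solution k B c : c < k -> avoids B c -> TS_solution k B (thin_set B c).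
Proof.
  intros Hc Hv. unfold TS_solution, thin_set. repeat split; auto.
  - intros n. destruct (Nat.eqb (B n) c); lia.
  - intros m. destruct (Hv m) as [n [Hn Ne]]. exists n.
    apply Nat.eqb_neq in Ne. rewrite Ne. auto.
  - intros x. destruct (Nat.eqb_spec (B x) c); congruence.
Qed.

Lemma agree_thin_set B B' c M : agree B B' M -> agree (thin_set B c) (thin_set B' c) M.
Proof. intros HB [|y] Hy; simpl; [reflexivity | rewrite HB by lia; reflexivity]. Qed.

Lemma avoids_one_of B c1 c2 : c1 <> c2 -> avoids B c1 \/ avoids B c2.
Proof.
  intros ne. apply NNPP. intros Hn. apply not_or_and in Hn as [N1 N2].
  apply not_all_ex_not in N1 as [m1 N1]. apply not_all_ex_not in N2 as [m2 N2].
  assert (B (m1 + m2) = c1) by (apply NNPP; intro; apply N1; exists (m1 + m2); split; [lia|auto]).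
  assert (B (m1 + m2) = c2) by (apply NNPP; intro; apply N2; exists (m1 + m2); split; [lia|auto]).
  congruence.
Qed.

Lemma avoids_all_but_one B : exists b, forall c, c <> b -> avoids B c.
Proof.
  destruct (classic (exists b, ~ avoids B b)) as [[b Hb]|Hn].
  - exists b. intros c ne. destruct (avoids_one_of B c b ne); tauto.
  - exists 0. intros c _. apply NNPP. intro. apply Hn; eauto.
Qed.

Lemma solution_color_not_eventual j g T N d :
  TS_solution j g T -> (forall x, N <= x -> g x = d) -> T 0 <> d.
Proof.
  intros [_ [_ [Tinf Tavoid]]] Hg Td.
  destruct (Tinf N) as [x [Hx Tx]].
  apply (Tavoid x Tx). rewrite Hg by exact Hx. auto.
Qed.

(* * The diagonalisation *)

Definition reduces_via (P Q : problem) (Phi Psi : prog) : Prop :=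
  forall A, instance P A ->
    (exists B, computes A Phi B /\ instance Q B) /\
    (forall B, computes A Phi B ->
       forall T, solution Q B T ->
         exists S, computes (join A T) Psi S /\ solution P A S).

Definition zero_coloring : nat -> nat := fun _ => 0.

Section Diagonalisation.
Variables (j k : nat) (Phi Psi : prog).
Hypothesis j_pos : 0 < j.
Hypothesis j_lt_k : j < k.
Hypothesis reduction : reduces_via (TS j) (TS k) Phi Psi.

Variable B0 : nat -> nat.
Hypothesis Phi_B0 : computes zero_coloring Phi B0.
Variable b : nat.
Hypothesis B0_avoids : forall c, c <> b -> avoids B0 c.

Definition answers (c d M : nat) : Prop :=
  forall A' T', agree (join zero_coloring (thin_set B0 c)) A' M ->
    computes A' Psi T' -> T' 0 = d.

Lemma answers_mono c d M M' : M <= M' -> answers c d M -> answers c d M'.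
Proof. intros HM Hc A' T' Ag. apply Hc. eapply agree_mono; [|exact Ag]; lia. Qed.

Lemma answer_color c : c < k -> c <> b -> exists d M, 1 <= d < j /\ answers c d M.
Proof.
  intros Hck Hcb.
  assert (I0 : TS_instance j zero_coloring) by (intro; unfold zero_coloring; lia).
  destruct (proj2 (reduction zero_coloring I0) B0 Phi_B0 (thin_set B0 c)
              (thin_set_solution k B0 c Hck (B0_avoids c Hcb))) as [T [HT Tsol]].
  destruct (computes_use _ _ _ 0 HT) as [M HM].
  exists (T 0), M. split.
  - pose proof (solution_color_not_eventual j zero_coloring T 0 0 Tsol (fun _ _ => eq_refl)).
    destruct Tsol. lia.
  - exact HM.
Qed.

(* Two distinct colors with the same answer are impossible: switch the zero
   coloring to [d] beyond the relevant prefix. *)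
Lemma shared_answer_absurd c1 c2 d M :
  c1 <> c2 -> c1 < k -> c2 < k -> d < j -> answers c1 d M -> answers c2 d M -> False.
Proof.
  intros Hne Hc1 Hc2 Hd A1 A2.
  destruct (computes_use_upto _ _ _ M Phi_B0) as [L HL].
  set (gd := fun x => if x <? L + M then 0 else d).
  assert (Agd : agree zero_coloring gd (L + M)).
  { intros x Hx. unfold gd. destruct (Nat.ltb_spec x (L + M)); [reflexivity | lia]. }
  assert (Id : TS_instance j gd) by (intro x; unfold gd; destruct (x <? L + M); lia).
  destruct (reduction gd Id) as [[Bd [HBd _]] Hsol].
  assert (EB : agree B0 Bd M).
  { intros x Hx. apply (HL gd); auto. eapply agree_mono; [|exact Agd]; lia. }
  assert (refute : forall c, c < k -> avoids Bd c -> answers c d M -> False).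
  { intros c Hc Hv Ac.
    destruct (Hsol Bd HBd (thin_set Bd c) (thin_set_solution k Bd c Hc Hv)) as [T [HT Tsol]].
    apply (solution_color_not_eventual j gd T (L + M) d Tsol).
    - intros x Hx. unfold gd. destruct (Nat.ltb_spec x (L + M)); [lia | reflexivity].
    - apply (Ac (join gd (thin_set Bd c)) T); auto.
      apply agree_join; [eapply agree_mono; [|exact Agd]; lia | exact (agree_thin_set _ _ c _ EB)]. }
  destruct (avoids_one_of Bd c1 c2 Hne) as [V|V]; eauto.
Qed.

(* Among the [k - 1 >= j] colors other than [b], answering in [1, j), two
   share an answer. *)
Lemma reduction_absurd : False.
Proof.
  assert (Hchoice : forall c, exists dM : nat * nat,
            (c = b -> fst dM = 0) /\
            (c <> b -> c < k -> 1 <= fst dM < j /\ answers c (fst dM) (snd dM))).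
  { intros c. destruct (Nat.eq_dec c b) as [->|Hcb].
    - exists (0, 0). split; [reflexivity | congruence].
    - destruct (classic (c < k)) as [Hck|Hck].
      + destruct (answer_color c Hck Hcb) as [d [M H]]. exists (d, M). simpl. tauto.
      + exists (0, 0). split; [congruence | tauto]. }
  destruct (choice _ Hchoice) as [f Hf].
  destruct (pigeonhole k j (fun c => fst (f c))) as [c1 [c2 [H1 [H2 [Hne Heq]]]]];
    auto.
  { intros c Hc. destruct (Nat.eq_dec c b) as [->|Hcb].
    - rewrite (proj1 (Hf b) eq_refl). exact j_pos.
    - apply (proj2 (Hf c) Hcb Hc). }
  simpl in Heq.
  (* [b] answers 0 while every other color answers at least 1. *)
  assert (not_b : forall c c', c' < k -> c <> c' -> fst (f c) = fst (f c') -> c <> b).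
  { intros c c' Hc' Hcc' Hfc ->. rewrite (proj1 (Hf b) eq_refl) in Hfc.
    destruct (proj2 (Hf c') (not_eq_sym Hcc') Hc') as [Hd _]. lia. }
  pose proof (not_b c1 c2 H2 Hne Heq) as Hb1.
  pose proof (not_b c2 c1 H1 (not_eq_sym Hne) (eq_sym Heq)) as Hb2.
  destruct (proj2 (Hf c1) Hb1 H1) as [Hd A1], (proj2 (Hf c2) Hb2 H2) as [_ A2].
  rewrite <- Heq in A2.
  apply (shared_answer_absurd c1 c2 (fst (f c1)) (snd (f c1) + snd (f c2)) Hne H1 H2);
    [lia | eapply answers_mono; [|exact A1] | eapply answers_mono; [|exact A2]]; lia.
Qed.
End Diagonalisation.

Theorem theorem5p18 (j k : nat) (hj : 2 <= j) (hk : 2 <= k) (hjk : j < k) :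
  ~ weihrauch_le (TS j) (TS k).
Proof.
  intros [Phi [Psi Hred]].
  assert (I0 : TS_instance j zero_coloring) by (intro; unfold zero_coloring; lia).
  destruct (proj1 (Hred zero_coloring I0)) as [B0 [HB0 _]].
  destruct (avoids_all_but_one B0) as [b Hb].
  exact (reduction_absurd j k Phi Psi ltac:(lia) hjk Hred B0 HB0 b Hb).
Qed.
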